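(* Let $q=p^t$ be a prime power and $m\geq 1$. If there exists an $((n,K,d_z/d_x))_{q^m}$ stabilizer code, then there exists an $((nm,K,d_z^{*}/d_x^{*}))_q$ stabilizer code, where $d_z^{*}\geq d_z$ and $d_x^{*}\geq d_x$.
   Context: For a prime power $q=p^t$, let $\{|x\rangle : x\in\mathbb{F}_q\}$ be an orthonormal basis of $\mathbb{C}^q$, $\omega=e^{2\pi i/p}$, and for $a,b\in\mathbb{F}_q$ let $X(a)|x\rangle=|x+a\rangle$, $Z(b)|x\rangle=\omega^{\mathrm{tr}_{q/p}(bx)}|x\rangle$. For $\mathbf a,\mathbf b\in\mathbb{F}_q^n$, $X(\mathbf a)=X(a_1)\otimes\cdots\otimes X(a_n)$, $Z(\mathbf b)$ similarly, and the error group is $G_n=\{\omega^cX(\mathbf a)Z(\mathbf b): \mathbf a,\mathbf b\in\mathbb{F}_q^n, c\in\mathbb{F}_p\}$. For $e=\omega^cX(\mathbf a)Z(\mathbf b)$, $\mathrm{wt}_X(e)=\#\{i: a_i\neq 0\}$ and $\mathrm{wt}_Z(e)=\#\{i: b_i\neq0\}$. A stabilizer code is the joint $+1$-eigenspace in $\mathbb{C}^{q^n}$ of an abelian subgroup of $G_n$ (not containing nontrivial scalars). An $((n,K,d_z/d_x))_q$ (asymmetric) stabilizer code is a $K$-dimensional stabilizer code in $\mathbb{C}^{q^n}$ that corrects all qudit-flip errors up to $\lfloor (d_x-1)/2\rfloor$ and all phase-shift errors up to $\lfloor (d_z-1)/2\rfloor$; equivalently, with associated additive code $C\leq\mathbb{F}_q^{2n}$,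 $|C|=q^n/K$, $C\leq C^{\perp_s}$ (trace-symplectic dual), $d_x$ and $d_z$ are the minimum $X$-weight and $Z$-weight of elements of $C^{\perp_s}\setminus C$ (of $C^{\perp_s}$ if $K=1$), where for $(\mathbf a|\mathbf b)$ the $X$-weight is the Hamming weight of $\mathbf a$ and the $Z$-weight that of $\mathbf b$. *)

From HB Require Import structures.
From mathcomp Require Import all_boot all_order all_algebra all_field.
Set Implicit Arguments. Unset Strict Implicit. Unset Printing Implicit Defensive.
Import GRing.Theory.
Local Open Scope ring_scope.

Section StabCodes.
Variable F : finFieldType.

(* characteristic p of F and exponent t with #|F| = p ^ t *)
Definition fchar : nat := pdiv #|F|.
Definition fdeg : nat := logn fchar #|F|.

(* absolute trace tr_{q/p} : F -> F_p (viewed inside F) *)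
Definition ftrace (x : F) : F := \sum_(i < fdeg) x ^+ (fchar ^ i).

Variable n : nat.

Definition svec := ('rV[F]_n * 'rV[F]_n)%type.

Definition svec0 : svec := (0, 0).

Definition hwt (v : 'rV[F]_n) : nat := #|[set i : 'I_n | v 0 i != 0]|.
Definition wtX (u : svec) : nat := hwt u.1.
Definition wtZ (u : svec) : nat := hwt u.2.

Definition dotv (a b : 'rV[F]_n) : F := \sum_(i < n) a 0 i * b 0 i.

Definition symp (u v : svec) : F := ftrace (dotv u.2 v.1 - dotv v.2 u.1).

Definition additive_code (C : {set svec}) : Prop :=
  svec0 \in C /\
  forall u v, u \in C -> v \in C -> (u.1 + v.1, u.2 + v.2) \in C.

Definition sdual (C : {set svec}) : {set svec} :=
  [set v | [forall u in C, symp u v == 0]].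

Definition is_min_of (S : {set svec}) (w : svec -> nat) (d : nat) : Prop :=
  (exists2 v, v \in S & w v = d) /\ (forall v, v \in S -> (d <= w v)%N).

Definition is_stab_code (K dz dx : nat) : Prop :=
  exists C : {set svec},
    [/\ additive_code C,
        (#|C| * K = #|F| ^ n)%N,
        C \subset sdual C &
        let S := if K == 1%N then sdual C :\ svec0 else sdual C :\: C in
        is_min_of S wtX dx /\ is_min_of S wtZ dz].

End StabCodes.

From HB Require Import structures.
From mathcomp Require Import all_boot all_order all_algebra all_field.
Set Implicit Arguments. Unset Strict Implicit. Unset Printing Implicit Defensive.
Import GRing.Theory passmx.
Local Open Scope ring_scope.

(* Fix an additive bijection α : L -> F^m. The maps y |-> (x |-> Tr_L (y x)) and
   w |-> (x |-> \sum_j Tr_F (w_j α(x)_j)) are injective additive maps into the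
   'F_p-dual of L, which has only #|L| = #|F^m| elements; hence every y has a
   trace-dual image β(y) with Tr_L (y x) = \sum_j Tr_F (β(y)_j α(x)_j).
   Expanding every coordinate of (a|b) in L^2n by α on the X part and by β on the
   Z part therefore preserves the vanishing of the trace-symplectic form, maps a
   code and its symplectic dual bijectively onto the expanded code and its dual,
   and cannot lower X- or Z-weights, since a nonzero coordinate expands to a
   nonzero block. *)

Section AbsoluteTrace.
Variables (R : finFieldType) (p : nat).
Hypothesis pR : p \in [pchar R].
Local Notation t := (logn p #|R|).

Let p_prime : prime p := pcharf_prime pR.

Lemma card_pchar : #|R| = (p ^ t)%N.
Proof. exact: card_pprimeChar pR. Qed.

Lemma logn_card_gt0 : (0 < t)%N.
Proof.
by rewrite lt0n; apply: contraTneq (finNzRing_gt1 R) => t0; rewrite card_pchar t0.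
Qed.

Lemma fchar_pchar : fchar R = p.
Proof. by rewrite /fchar card_pchar -(prednK logn_card_gt0) pdiv_pfactor. Qed.

Lemma ftraceE (x : R) : ftrace x = \sum_(i < t) x ^+ (p ^ i).
Proof. by rewrite /ftrace /fdeg fchar_pchar. Qed.

Lemma pchar_nat_expn i : [pchar R].-nat (p ^ i)%N.
Proof. by rewrite pnatX (pnatE _ p_prime) pR. Qed.

Lemma ftrace_is_zmod_morphism_pchar : zmod_morphism (@ftrace R).
Proof.
move=> x y; rewrite !ftraceE -sumrB; apply: eq_bigr => i _.
by rewrite exprDn_pchar ?exprNn_pchar ?pchar_nat_expn.
Qed.

End AbsoluteTrace.

Fact ftrace_is_zmod_morphism (R : finFieldType) : zmod_morphism (@ftrace R).
Proof. by have [p _ pR] := finPcharP R; apply: ftrace_is_zmod_morphism_pchar pR. Qed.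

HB.instance Definition _ (R : finFieldType) :=
  GRing.isZmodMorphism.Build R R (@ftrace R) (@ftrace_is_zmod_morphism R).

Section PrimeFieldTrace.
Variables (R : finFieldType) (p : nat).
Hypothesis pR : p \in [pchar R].
Local Notation Rp := (pPrimeCharType pR).
Local Notation t := (logn p #|R|).

Let p_prime : prime p := pcharf_prime pR.

Lemma frobenius_fixed (z : R) : z ^+ p = z -> exists c : 'F_p, z = c%:A :> Rp.
Proof.
move=> zp; have : (z : Rp) \in 1%VS.
  by rewrite Fermat's_little_theorem dimv1 card_Fp // expn1 zp.
by case/vlineP => c ->; exists c.
Qed.

(* Frobenius shifts the terms of the trace cyclically, as x ^+ #|R| = x. *)
Lemma ftrace_frobenius (x : R) : ftrace x ^+ p = ftrace x.
Proof.
rewrite (ftraceE pR) -(pFrobenius_autE pR) rmorph_sum /=.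
under eq_bigr => i _ do rewrite pFrobenius_autE -exprM -expnSr.
have := card_pchar pR; have := logn_card_gt0 pR.
case: t => // t _ cardR.
by rewrite big_ord_recr big_ord_recl /= -cardR expf_card expn0 expr1 addrC.
Qed.

(* The trace is a polynomial map of degree p ^ (t - 1) < #|R|. *)
Lemma ftrace_neq0 : exists x : R, ftrace x != 0.
Proof.
apply/existsP/contraT; rewrite negb_exists => /forallP trace0.
have := card_pchar pR; have := logn_card_gt0 pR.
have traceE := ftraceE pR; case: t traceE => // t traceE _ cardR.
pose Q : {poly R} := \sum_(i < t.+1) 'X^(p ^ i).
have rootQ : all (root Q) (enum R).
  apply/allP => x _; rewrite /root horner_sum; under eq_bigr do rewrite hornerXn.
  by rewrite -traceE; apply/negPn.
have Q1 : Q`_1 = 1.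
  rewrite coef_sum big_ord_recl coefXn expn0 eqxx big1 ?addr0 // => i _.
  by rewrite coefXn ltn_eqF // -[1%N](expn0 p) ltn_exp2l ?prime_gt1.
have Q_neq0 : Q != 0 by apply: contra_eq_neq Q1 => ->; rewrite coef0 eq_sym oner_neq0.
have := max_poly_roots Q_neq0 rootQ (enum_uniq R).
rewrite -cardE cardR ltnNge => /negP[].
apply: leq_trans (size_sum _ _ _) _; apply/bigmax_leqP => i _.
by rewrite size_polyXn ltn_exp2l ?prime_gt1.
Qed.

Definition ftrace_Fp (x : R) : 'F_p := odflt 0 [pick c : 'F_p | c%:A == ftrace x :> Rp].

Lemma ftrace_FpK (x : R) : (ftrace_Fp x)%:A = ftrace x :> Rp.
Proof.
rewrite /ftrace_Fp; case: pickP => [c /eqP // | none].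
have [c trace_c] := frobenius_fixed (ftrace_frobenius x).
by have := none c; rewrite -trace_c eqxx.
Qed.

Lemma ftrace_Fp_eq0 (x : R) : (ftrace_Fp x == 0) = (ftrace x == 0).
Proof. by rewrite -ftrace_FpK -(fmorph_eq0 (in_alg Rp)). Qed.

Fact ftrace_Fp_is_zmod_morphism : zmod_morphism ftrace_Fp.
Proof.
move=> x y; apply: (fmorph_inj (in_alg Rp)); rewrite rmorphB /=.
by rewrite !ftrace_FpK raddfB.
Qed.

Lemma ftrace_Fp_nondegenerate (y : R) : y != 0 -> exists x, ftrace_Fp (y * x) != 0.
Proof.
move=> y_neq0; have [x trace_x] := ftrace_neq0.
by exists (y^-1 * x); rewrite ftrace_Fp_eq0 mulVKf.
Qed.

End PrimeFieldTrace.

HB.instance Definition _ (R : finFieldType) p (pR : p \in [pchar R]) :=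
  GRing.isZmodMorphism.Build R 'F_p (ftrace_Fp pR) (ftrace_Fp_is_zmod_morphism pR).

Section AdditiveFunctionals.
Variables (R : finFieldType) (p : nat).
Hypothesis pR : p \in [pchar R].
Local Notation Rp := (pPrimeCharType pR).
Local Notation b := (vbasis {:Rp}).

Let p_prime : prime p := pcharf_prime pR.

Definition additive_functionals : {set {ffun R -> 'F_p}} :=
  [set f : {ffun R -> 'F_p} | [forall x, forall y, f (x + y) == f x + f y]].

Lemma additive_functional_coord (f : {additive Rp -> 'F_p}) x :
  f x = \sum_i coord b i x * f b`_i.
Proof.
rewrite {1}(coord_vbasis (memvf x)) raddf_sum; apply: eq_bigr => i _.
by rewrite -[coord _ i x]natr_Zp scaler_nat raddfMn mulr_natl.
Qed.

Lemma card_additive_functionals : (#|additive_functionals| <= #|R|)%N.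
Proof.
pose values (f : {ffun R -> 'F_p}) : 'rV['F_p]_(\dim {:Rp}) := \row_i f b`_i.
rewrite -(card_in_imset (f := values)).
  apply: leq_trans (max_card _) _.
  by rewrite card_mx card_Fp // mul1n pprimeChar_dimf -card_pprimeChar.
have pack f : f \in additive_functionals -> {fA : {additive Rp -> 'F_p} | fA =1 f}.
  rewrite inE => /forallP fD.
  have {}fD : {morph f : x y / x + y} by move=> x y; apply/eqP/(forallP (fD x)).
  have f0 : f 0 = 0 by apply: (@addrI _ (f 0)); rewrite -fD !addr0.
  pose fA := GRing.isNmodMorphism.Build Rp _ (fun_of_fin f) (f0, fD).
  by exists (HB.pack_for {additive Rp -> 'F_p} (fun_of_fin f) fA).
move=> f g /pack[fA fAE] /pack[gA gAE] /rowP eq_values; apply/ffunP => x.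
rewrite -fAE -gAE !additive_functional_coord; apply: eq_bigr => i _.
by have := eq_values i; rewrite !mxE -fAE -gAE => ->.
Qed.

End AdditiveFunctionals.

Section TraceDualBasis.
Variables (L F : finFieldType) (p m : nat).
Hypotheses (pL : p \in [pchar L]) (pF : p \in [pchar F]).
Hypothesis cardL : #|L| = (#|F| ^ m)%N.
Local Notation VL := (pPrimeCharType pL).
Local Notation VF := (pPrimeCharType pF).

Lemma dimv_pPrimeChar_pow : \dim {:VL} = (m * \dim {:VF})%N.
Proof. by rewrite !pprimeChar_dimf cardL lognX. Qed.

Lemma exists_additive_bij : exists α : {additive L -> 'rV[F]_m}, bijective α.
Proof.
pose eL := vbasis {:VL}; pose eF := vbasis {:VF}.
suff [g gB g_bij] : exists2 g : 'rV['F_p]_(\dim {:VL}) -> 'rV[F]_m,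
    zmod_morphism g & bijective g.
  have αB : zmod_morphism (g \o rVof eL).
    by move=> x y; rewrite /comp raddfB gB.
  pose αA := GRing.isZmodMorphism.Build L 'rV[F]_m (g \o rVof eL) αB.
  exists (HB.pack_for {additive L -> 'rV[F]_m} (g \o rVof eL) αA).
  exact: bij_comp g_bij (Bijective (rVofK (vbasisP _)) (vecofK (vbasisP _))).
rewrite dimv_pPrimeChar_pow.
exists (fun r => \row_j (vecof eF (row j (vec_mx r)) : F) : 'rV[F]_m).
  by move=> r s; apply/rowP => j; rewrite !mxE !raddfB.
exists (fun w : 'rV[F]_m => mxvec (\matrix_j rVof eF (w 0 j : VF))).
  move=> r; rewrite -[RHS]vec_mxK; congr mxvec; apply/row_matrixP => j.
  by rewrite rowK mxE vecofK // vbasisP.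
by move=> w; apply/rowP => j; rewrite mxE mxvecK rowK rVofK // vbasisP.
Qed.

Variable α : {additive L -> 'rV[F]_m}.
Hypothesis α_bij : bijective α.

Definition trace_functional (y : L) : {ffun L -> 'F_p} := [ffun x => ftrace_Fp pL (y * x)].

Definition row_functional (w : 'rV[F]_m) : {ffun L -> 'F_p} :=
  [ffun x => \sum_j ftrace_Fp pF (w 0 j * α x 0 j)].

Lemma trace_functionalB y1 y2 x :
  trace_functional (y1 - y2) x = trace_functional y1 x - trace_functional y2 x.
Proof. by rewrite !ffunE mulrBl raddfB. Qed.

Lemma row_functionalB w1 w2 x :
  row_functional (w1 - w2) x = row_functional w1 x - row_functional w2 x.
Proof.
by rewrite !ffunE -sumrB; apply: eq_bigr => j _; rewrite !mxE mulrBl raddfB.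
Qed.

Lemma trace_functional_inj : injective trace_functional.
Proof.
move=> y1 y2 eq_y; apply/eqP; rewrite -subr_eq0; apply: contraTT isT.
case/(ftrace_Fp_nondegenerate pL) => x; apply: contraNT => _.
by have := trace_functionalB y1 y2 x; rewrite eq_y subrr ffunE => ->.
Qed.

Lemma row_functional_inj : injective row_functional.
Proof.
move=> w1 w2 eq_w; apply/rowP => j; apply/eqP; rewrite -subr_eq0.
apply: contraTT isT => /(ftrace_Fp_nondegenerate pF)[c tr_c].
have [αinv αK Kα] := α_bij; pose x := αinv (c *: delta_mx 0 j).
have := row_functionalB w1 w2 x; rewrite eq_w subrr ffunE /x Kα.
rewrite (bigD1 j) //= big1 => [|k /negPf k_neq_j]; last first.
  by rewrite !mxE k_neq_j mulr0 mulr0 raddf0.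
by rewrite !mxE !eqxx mulr1 addr0 => /eqP; rewrite (negPf tr_c).
Qed.

Lemma trace_functional_additive y : trace_functional y \in additive_functionals L p.
Proof.
by rewrite inE; apply/'forall_'forall_eqP => x x'; rewrite !ffunE mulrDr raddfD.
Qed.

Lemma row_functional_additive w : row_functional w \in additive_functionals L p.
Proof.
rewrite inE; apply/'forall_'forall_eqP => x x'; rewrite !ffunE -big_split.
by apply: eq_bigr => j _; rewrite raddfD mxE mulrDr raddfD.
Qed.

Lemma row_functional_onto f :
  f \in additive_functionals L p -> exists w, row_functional w = f.
Proof.
have : [set row_functional w | w in 'rV[F]_m] = additive_functionals L p.
  apply/eqP; rewrite eqEcard card_imset; last exact: row_functional_inj.
  rewrite (leq_trans (card_additive_functionals pL)) ?card_mx ?mul1n -?cardL // andbT.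
  by apply/subsetP => _ /imsetP[w _ ->]; apply: row_functional_additive.
by move=> <- /imsetP[w _ ->]; exists w.
Qed.

Definition trace_dual (y : L) : 'rV[F]_m :=
  odflt 0 [pick w | row_functional w == trace_functional y].

Lemma row_functional_trace_dual y : row_functional (trace_dual y) = trace_functional y.
Proof.
rewrite /trace_dual; case: pickP => [w /eqP // | none].
have [w eq_w] := row_functional_onto (trace_functional_additive y).
by have := none w; rewrite eq_w eqxx.
Qed.

Lemma trace_dual_is_zmod_morphism : zmod_morphism trace_dual.
Proof.
move=> y1 y2; apply: row_functional_inj; apply/ffunP => x.
by rewrite row_functionalB !row_functional_trace_dual trace_functionalB.
Qed.

Lemma trace_dual_bij : bijective trace_dual.
Proof.
apply: inj_card_bij; last by rewrite card_mx mul1n cardL.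
move=> y1 y2 /(congr1 row_functional); rewrite !row_functional_trace_dual.
exact: trace_functional_inj.
Qed.

Lemma ftrace_Fp_mul_trace_dual y x :
  ftrace_Fp pL (y * x) = \sum_j ftrace_Fp pF (trace_dual y 0 j * α x 0 j).
Proof.
by have /ffunP/(_ x) := row_functional_trace_dual y; rewrite !ffunE => ->.
Qed.

Lemma exists_trace_dual : exists β : {additive L -> 'rV[F]_m}, bijective β /\
  forall y x, ftrace_Fp pL (y * x) = \sum_j ftrace_Fp pF (β y 0 j * α x 0 j).
Proof.
pose βA := GRing.isZmodMorphism.Build _ _ _ trace_dual_is_zmod_morphism.
exists (HB.pack_for {additive L -> 'rV[F]_m} trace_dual βA).
by split; [apply: trace_dual_bij | apply: ftrace_Fp_mul_trace_dual].
Qed.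

End TraceDualBasis.

Definition expand_row (U V : Type) (m n : nat) (g : U -> 'rV[V]_m) (a : 'rV[U]_n) :
  'rV[V]_(n * m) := mxvec (\matrix_(i, j) g (a 0 i) 0 j).

Lemma expand_row_bij (U V : Type) m n (g : U -> 'rV[V]_m) :
  bijective g -> bijective (@expand_row U V m n g).
Proof.
case=> ginv gK Kg; exists (fun r => \row_i ginv (row i (vec_mx r))).
  move=> a; apply/rowP => i; rewrite mxE mxvecK.
  by rewrite (_ : row i _ = g (a 0 i)) ?gK //; apply/rowP => j; rewrite !mxE.
move=> r; rewrite /expand_row -[RHS]vec_mxK; congr mxvec.
by apply/row_matrixP => i; rewrite rowK mxE Kg.
Qed.

Fact expand_row_is_zmod_morphism (U V : zmodType) m n (g : {additive U -> 'rV[V]_m}) :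
  zmod_morphism (@expand_row U V m n g).
Proof.
move=> a b; rewrite /expand_row -raddfB; congr mxvec.
by apply/row_matrixP => i; apply/rowP => j; rewrite rowK !mxE raddfB !mxE.
Qed.

HB.instance Definition _ (U V : zmodType) m n (g : {additive U -> 'rV[V]_m}) :=
  GRing.isZmodMorphism.Build _ _ (@expand_row U V m n g) (expand_row_is_zmod_morphism g).

Lemma dotv_expand_row (U : Type) (F : finFieldType) m n (g h : U -> 'rV[F]_m) a b :
  dotv (@expand_row U F m n g b) (expand_row h a) =
  \sum_i \sum_j g (b 0 i) 0 j * h (a 0 i) 0 j.
Proof.
rewrite /dotv (reindex (uncurry (@mxvec_index n m))) /=; last first.
  by case: (curry_mxvec_bij n m) => f f1 f2; exists f => x _; [apply: f1 | apply: f2].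
by rewrite pair_bigA /=; apply: eq_bigr => -[i j] _; rewrite !mxvecE !mxE.
Qed.

Lemma hwt_expand_row (L F : finFieldType) m n (g : L -> 'rV[F]_m) (a : 'rV[L]_n) :
  (forall x, x != 0 -> g x != 0) -> (hwt a <= hwt (expand_row g a))%N.
Proof.
move=> g_neq0.
pose block (k : 'I_(n * m)) := (enum_val (cast_ord (esym (mxvec_cast n m)) k)).1.
have blockE i j : block (mxvec_index i j) = i by rewrite /block cast_ordK enum_rankK.
apply: leq_trans (leq_imset_card block _); apply/subset_leq_card/subsetP => i.
rewrite inE => /g_neq0 gi_neq0.
have [j gj] : exists j, g (a 0 i) 0 j != 0.
  apply/existsP; apply: contraR gi_neq0 => /existsPn gi0.
  by apply/eqP/rowP => j; rewrite mxE; apply/eqP/negPn.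
by apply/imsetP; exists (mxvec_index i j); rewrite ?blockE // inE mxvecE mxE.
Qed.

Lemma is_min_of_imset (L F : finFieldType) n k (f : svec L n -> svec F k)
    (S : {set svec L n}) (w : svec L n -> nat) (w' : svec F k -> nat) d :
  (forall u, w u <= w' (f u))%N -> is_min_of S w d ->
  exists2 d', (d <= d')%N & is_min_of (f @: S) w' d'.
Proof.
move=> le_w [[u0 u0S _] min_d].
have exP : exists d', [exists v in f @: S, w' v == d'].
  by exists (w' (f u0)); apply/existsP; exists (f u0); rewrite imset_f ?eqxx.
have [d' /existsP[v /andP[/imsetP[u uS ->] /eqP <-]] min_d'] := ex_minnP exP.
exists (w' (f u)); first exact: leq_trans (min_d u uS) (le_w u).
split; first by exists (f u); rewrite ?imset_f.
move=> _ /imsetP[u' u'S ->]; apply: min_d'; apply/existsP.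
by exists (f u'); rewrite imset_f ?eqxx.
Qed.

Lemma imsetD_bij (aT rT : finType) (f : aT -> rT) (A B : {set aT}) :
  bijective f -> f @: (A :\: B) = f @: A :\: f @: B.
Proof. by case=> g fK gK; rewrite !(can2_imset_pre _ fK gK) preimsetD. Qed.

Section CodeExpansion.
Variables (L F : finFieldType) (p m n : nat).
Hypotheses (pL : p \in [pchar L]) (pF : p \in [pchar F]).
Hypothesis cardL : #|L| = (#|F| ^ m)%N.
Variables α β : {additive L -> 'rV[F]_m}.
Hypotheses (α_bij : bijective α) (β_bij : bijective β).
Hypothesis dual_pair :
  forall y x, ftrace_Fp pL (y * x) = \sum_j ftrace_Fp pF (β y 0 j * α x 0 j).

Definition expand_svec (u : svec L n) : svec F (n * m) :=
  (expand_row α u.1, expand_row β u.2).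

Lemma expand_svec_bij : bijective expand_svec.
Proof.
have [αinv αK Kα] := expand_row_bij n α_bij.
have [βinv βK Kβ] := expand_row_bij n β_bij.
exists (fun v => (αinv v.1, βinv v.2)) => -[a b].
  by rewrite /expand_svec /= αK βK.
by rewrite /expand_svec /= Kα Kβ.
Qed.

Lemma expand_svec_inj : injective expand_svec.
Proof. exact: bij_inj expand_svec_bij. Qed.

Lemma ftrace_Fp_dotv_expand_row (a b : 'rV[L]_n) :
  ftrace_Fp pF (dotv (expand_row β a) (expand_row α b)) = ftrace_Fp pL (dotv a b).
Proof.
rewrite dotv_expand_row !raddf_sum; apply: eq_bigr => i _.
by rewrite raddf_sum /= dual_pair.
Qed.

Lemma symp_expand_svec_eq0 u v :
  (symp (expand_svec u) (expand_svec v) == 0) = (symp u v == 0).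
Proof.
rewrite /symp -(ftrace_Fp_eq0 pF) -(ftrace_Fp_eq0 pL) !raddfB /=.
by rewrite !ftrace_Fp_dotv_expand_row.
Qed.

Lemma sdual_expand_svec (C : {set svec L n}) :
  sdual (expand_svec @: C) = expand_svec @: sdual C.
Proof.
have [einv eK Ke] := expand_svec_bij.
apply/setP => v; rewrite -[v]Ke mem_imset; last exact: expand_svec_inj.
rewrite !inE; apply/forall_inP/forall_inP => [dual_v u uC | dual_v _ /imsetP[u uC ->]].
  by rewrite -symp_expand_svec_eq0 dual_v ?imset_f.
by rewrite symp_expand_svec_eq0 dual_v.
Qed.

Lemma expand_svec0 : expand_svec (svec0 L n) = svec0 F (n * m).
Proof. by rewrite /expand_svec /= !raddf0. Qed.

Lemma expand_svecD u v : expand_svec (u.1 + v.1, u.2 + v.2) =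
  ((expand_svec u).1 + (expand_svec v).1, (expand_svec u).2 + (expand_svec v).2).
Proof. by rewrite /expand_svec /= !raddfD. Qed.

Lemma additive_code_expand_svec C : additive_code C -> additive_code (expand_svec @: C).
Proof.
case=> C0 C_add; split; first by rewrite -expand_svec0 imset_f.
move=> _ _ /imsetP[u uC ->] /imsetP[v vC ->].
by rewrite -expand_svecD imset_f ?C_add.
Qed.

Lemma wt_expand_svec u :
  (wtX u <= wtX (expand_svec u))%N /\ (wtZ u <= wtZ (expand_svec u))%N.
Proof.
have neq0 (g : {additive L -> 'rV[F]_m}) x : bijective g -> x != 0 -> g x != 0.
  by move=> /bij_inj g_inj; rewrite raddf_eq0.
by split; apply: hwt_expand_row => x; apply: neq0.
Qed.

Lemma stab_code_expand K dz dx : is_stab_code L n K dz dx ->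
  exists dz' dx' : nat,
    [/\ (dz <= dz')%N, (dx <= dx')%N & is_stab_code F (n * m) K dz' dx'].
Proof.
case=> C [C_add card_C C_sub [min_x min_z]].
have [dx' le_dx min_x'] := is_min_of_imset (fun u => (wt_expand_svec u).1) min_x.
have [dz' le_dz min_z'] := is_min_of_imset (fun u => (wt_expand_svec u).2) min_z.
exists dz', dx'; split => //; exists (expand_svec @: C); split.
- exact: additive_code_expand_svec.
- rewrite card_imset; last exact: expand_svec_inj.
  by rewrite card_C cardL -expnM mulnC.
- by rewrite sdual_expand_svec imsetS.
have E_bij := expand_svec_bij.
rewrite /= sdual_expand_svec -expand_svec0 -imset_set1 -!imsetD_bij //.
by case: (K == 1%N) min_x' min_z'.
Qed.

End CodeExpansion.

Local Close Scope ring_scope.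

Theorem theorem3 (F L : finFieldType) (m n K dz dx : nat) :
  (0 < m)%N -> #|L| = (#|F| ^ m)%N ->
  is_stab_code L n K dz dx ->
  exists dz' dx' : nat,
    [/\ (dz <= dz')%N, (dx <= dx')%N & is_stab_code F (n * m) K dz' dx'].
Proof.
(* [0 < m] is implied by [#|L| = #|F| ^ m], since #|L| > 1. *)
move=> _ cardL.
have [p p_prime pF] := finPcharP F.
have pL : p \in [pchar L]%R.
  by apply: card_finPcharP p_prime; rewrite cardL (card_pchar pF) -expnM.
have [α α_bij] := exists_additive_bij pL pF cardL.
have [β [β_bij dual_pair]] := exists_trace_dual pL pF cardL α_bij.
exact: (stab_code_expand cardL α_bij β_bij dual_pair).
Qed.
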